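(* Let $G$ be a graph with a type-2A 1-planar drawing $D$, and let $G'$ be the graph obtained from $G$ by removing one edge from each pair of crossing edges of $D$. If $G$ is connected and $D$ is nice, then $G'$ is a connected, spanning, planar subgraph of $G$.
   Context: All drawings are good (no edge crosses itself, two edges cross at most once, adjacent edges do not cross). A drawing is 1-planar if every edge is crossed at most once. If edges $ab$ and $cd$ cross in a 1-planar drawing of $G$, the associated edges of this crossing are the edges of $G[\{a,b,c,d\}]$ other than $ab$ and $cd$. A 1-planar drawing is type-2A if every crossing has at least two associated edges, and every crossing with exactly two associated edges has these two edges disjoint. A 1-planar drawing is nice if for every pair of crossing edges, all of their associated edges are uncrossed. *)

From HB Require Import structures.
From mathcomp Require Import all_boot all_order all_algebra.
From mathcomp Require Import all_classical all_reals all_analysis.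
Set Implicit Arguments. Unset Strict Implicit. Unset Printing Implicit Defensive.
Import Order.TTheory GRing.Theory Num.Theory.
Import numFieldNormedType.Exports.
Local Open Scope ring_scope.

Section Drawings.
Variables (R : realType) (T : finType).

(* A (finite simple) graph on vertex set T is given by a symmetric irreflexive
   adjacency relation; its edges are the 2-element vertex sets {u,v} with adj u v. *)
Definition is_edge (adj : rel T) (e : {set T}) : bool :=
  [exists u, exists v, adj u v && (e == [set u; v])].

Definition drawing (adj : rel T) (pos : T -> R * R) (arc : {set T} -> R -> R * R) : Prop :=
  injective pos /\
  forall e, is_edge adj e ->
    {within [set t : R | (0 <= t <= 1)%R], continuous (arc e)}%classic /\
    (forall s t : R, 0 <= s <= 1 -> 0 <= t <= 1 -> arc e s = arc e t -> s = t) /\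
    (exists u v, e = [set u; v] /\ arc e 0 = pos u /\ arc e 1 = pos v) /\
    (forall (t : R) (w : T), 0 < t < 1 -> arc e t <> pos w).

Definition cross (adj : rel T) (arc : {set T} -> R -> R * R) (e f : {set T}) : Prop :=
  is_edge adj e /\ is_edge adj f /\ e <> f /\
  exists s t : R, 0 < s < 1 /\ 0 < t < 1 /\ arc e s = arc f t.

(* Good drawing: a drawing (arcs are simple, i.e. no edge crosses itself) in which
   adjacent edges do not cross and two edges cross at most once. *)
Definition good_drawing (adj : rel T) pos arc : Prop :=
  drawing adj pos arc /\
  (forall e f, cross adj arc e f -> [disjoint e & f]) /\
  (forall e f, is_edge adj e -> is_edge adj f -> e <> f ->
     forall s t s' t' : R, 0 < s < 1 -> 0 < t < 1 -> 0 < s' < 1 -> 0 < t' < 1 ->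
       arc e s = arc f t -> arc e s' = arc f t' -> s = s').

Definition one_planar (adj : rel T) arc : Prop :=
  forall e f g, cross adj arc e f -> cross adj arc e g -> f = g.

Definition assoc (adj : rel T) (e f : {set T}) : {set {set T}} :=
  [set x | is_edge adj x && (x \subset e :|: f) && (x != e) && (x != f)].

Definition type2A (adj : rel T) arc : Prop :=
  forall e f, cross adj arc e f ->
    (2 <= #|assoc adj e f|)%N /\
    (#|assoc adj e f| = 2%N ->
       forall x y, x \in assoc adj e f -> y \in assoc adj e f -> x != y -> [disjoint x & y]).

Definition nice (adj : rel T) arc : Prop :=
  forall e f, cross adj arc e f ->
    forall x, x \in assoc adj e f -> forall g, ~ cross adj arc x g.

Definition removal_set (adj : rel T) arc (Rm : {set {set T}}) : Prop :=
  (forall e, e \in Rm -> exists f, cross adj arc e f) /\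
  (forall e f, cross adj arc e f -> (e \in Rm) != (f \in Rm)).

Definition delete_edges (adj : rel T) (Rm : {set {set T}}) : rel T :=
  [rel u v | adj u v && ([set u; v] \notin Rm)].

Definition connected_graph (adj : rel T) : Prop := forall u v, connect adj u v.

Definition planar (adj : rel T) : Prop :=
  exists (pos : T -> R * R) (arc : {set T} -> R -> R * R),
    drawing adj pos arc /\ forall e f, ~ cross adj arc e f.

End Drawings.

From HB Require Import structures.
From mathcomp Require Import all_boot all_order all_algebra.
From mathcomp Require Import all_classical all_reals all_analysis.

Set Implicit Arguments.
Unset Strict Implicit.
Unset Printing Implicit Defensive.

(* Planarity: a crossing of the kept edges would be a crossing of D with
   neither edge removed.  Connectivity: it suffices to join the endpoints of
   each removed edge ab.  It crosses a kept edge cd, and by niceness no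
   associated edge of this crossing is crossed, so all of them are kept.  An
   associated edge joins {a,b} to {c,d}; if none of them contains a, they are
   among bc, bd, so there are exactly two and they share b, which type 2A
   forbids.  Hence a kept associated edge links a to {c,d}, and likewise b. *)

Section Edges.
Variables (T : finType) (adj : rel T).
Hypothesis adjI : irreflexive adj.

Lemma is_edge_card e : is_edge adj e -> #|e| = 2.
Proof.
case/existsP=> u /existsP[v /andP[uv /eqP->]].
by rewrite cards2; case: eqP uv => [->|//]; rewrite adjI.
Qed.

Lemma is_edge_sub2_eq e z w : is_edge adj e -> e \subset [set z; w] -> e = [set z; w].
Proof.
move=> ee sub; apply/eqP; rewrite eqEcard sub (is_edge_card ee) cards2.
by case: (_ != _).
Qed.

Lemma assoc_edge_across z w c d g :
  g \in assoc adj [set z; w] [set c; d] ->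
  exists u v, [/\ g = [set u; v], u \in [set z; w] & v \in [set c; d]].
Proof.
rewrite inE => /andP[/andP[/andP[ge gs] gnze] gncd].
have not_sub x y : g != [set x; y] -> ~~ (g \subset [set x; y]).
  by apply: contra => /(is_edge_sub2_eq ge)->.
have /existsP[a /existsP[b /andP[_ /eqP defg]]] := ge.
move: gs (not_sub _ _ gnze) (not_sub _ _ gncd).
rewrite defg !finset.subUset !finset.sub1set !(finset.in_setU _ [set z; w]).
case aE: (a \in [set z; w]); case aF: (a \in [set c; d]);
  case bE: (b \in [set z; w]); case bF: (b \in [set c; d]) => //= _ _ _.
- by exists a, b; rewrite aE bF.
- by exists b, a; rewrite finset.setUC aF bE.
Qed.

End Edges.

Lemma sub_star2_intersecting (T : finType) (A : {set {set T}}) w c d :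
  A \subset [set [set w; c]; [set w; d]] -> (2 <= #|A|)%N ->
  #|A| = 2 /\ exists x y, [/\ x \in A, y \in A, x != y & ~~ [disjoint x & y]].
Proof.
move=> AS A2; have A_2 : #|A| == 2.
  rewrite eqn_leq A2 andbT; apply: leq_trans (subset_leq_card AS) _.
  by rewrite cards2; case: (_ != _).
have wA v : v \in A -> w \in v.
  by move/(fintype.subsetP AS); rewrite !inE => /orP[] /eqP->; rewrite !inE eqxx.
split; first exact/eqP.
case/cards2P: A_2 => x [y [xy defA]].
have [xA yA] : x \in A /\ y \in A by rewrite defA !inE !eqxx orbT.
exists x, y; split=> //; apply/negP => /disjointFr/(_ (wA x xA)).
by rewrite wA.
Qed.

Section DeleteEdges.
Variables (T : finType) (adj : rel T) (Rm : {set {set T}}).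
Hypothesis adjS : symmetric adj.

Local Notation adj' := (delete_edges adj Rm).

Lemma delete_edges_sym : symmetric adj'.
Proof. by move=> u v; rewrite /delete_edges /= adjS finset.setUC. Qed.

Lemma is_edge_delete_edges e : is_edge adj' e -> is_edge adj e /\ e \notin Rm.
Proof.
case/existsP=> u /existsP[v /andP[/andP[uv nRm] /eqP defe]]; subst e.
by split=> //; apply/existsP; exists u; apply/existsP; exists v; rewrite uv eqxx.
Qed.

Lemma connect_kept_edge e u v :
  is_edge adj e -> e \notin Rm -> u \in e -> v \in e -> connect adj' u v.
Proof.
case/existsP=> a /existsP[b /andP[ab /eqP->]] nRm.
have ab' : adj' a b by rewrite /delete_edges /= ab nRm.
have ba' : adj' b a by rewrite delete_edges_sym.
by rewrite !inE => /orP[] /eqP-> /orP[] /eqP->; rewrite ?connect0 ?connect1.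
Qed.

End DeleteEdges.

Section Crossings.
Variables (R : realType) (T : finType) (adj : rel T).
Variables (arc : {set T} -> R -> R * R) (Rm : {set {set T}}).
Hypotheses (adjS : symmetric adj) (adjI : irreflexive adj).
Hypotheses (adj2A : type2A adj arc) (adj_nice : nice adj arc).
Hypothesis removal : removal_set adj arc Rm.

Local Notation adj' := (delete_edges adj Rm).

Lemma assoc_is_edge e f g : g \in assoc adj e f -> is_edge adj g.
Proof. by rewrite inE => /andP[/andP[/andP[]]]. Qed.

Lemma assoc_kept e f g : cross adj arc e f -> g \in assoc adj e f -> g \notin Rm.
Proof.
move=> ef gA; apply/negP => /removal.1[h gh].
exact: adj_nice ef g gA h gh.
Qed.

Lemma cross_connect z w c d :
  cross adj arc [set z; w] [set c; d] -> [set c; d] \notin Rm -> connect adj' z c.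
Proof.
move=> zwcd cdK; apply/idPn => nzc.
have [A2 Adisj] := adj2A zwcd.
have AS : assoc adj [set z; w] [set c; d] \subset [set [set w; c]; [set w; d]].
  apply/fintype.subsetP => g gA.
  have [u [v [defg uzw vcd]]] := assoc_edge_across adjI gA.
  case/set2P: uzw defg => -> defg.
    case/negP: nzc; apply: (connect_trans (y := v)).
      by apply: (connect_kept_edge adjS (assoc_is_edge gA) (assoc_kept zwcd gA));
        rewrite defg !inE eqxx ?orbT.
    by apply: (connect_kept_edge adjS zwcd.2.1 cdK vcd); rewrite !inE eqxx.
  by rewrite defg !inE; case/set2P: vcd => ->; rewrite eqxx ?orbT.
have [A_2 [x [y [xA yA xy xy_meet]]]] := sub_star2_intersecting AS A2.
by case/negP: xy_meet; apply: Adisj.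
Qed.

Lemma removed_edge_connect x y : [set x; y] \in Rm -> connect adj' x y.
Proof.
move=> xyR; have [f xyf] := removal.1 _ xyR.
have fK : f \notin Rm by move: (removal.2 _ _ xyf); rewrite xyR.
have /existsP[c /existsP[d /andP[_ /eqP defF]]] := xyf.2.1; subst f.
have yxcd : cross adj arc [set y; x] [set c; d] by rewrite finset.setUC.
apply: connect_trans (cross_connect xyf fK) _.
by rewrite (sym_connect_sym (delete_edges_sym Rm adjS)) (cross_connect yxcd fK).
Qed.

Lemma delete_edges_connected : connected_graph adj -> connected_graph adj'.
Proof.
move=> conn u v; apply: connect_sub (conn u v) => x y xy.
have [/removed_edge_connect //|xyK] := boolP ([set x; y] \in Rm).
by apply: connect1; rewrite /delete_edges /= xy.
Qed.

Lemma delete_edges_planar pos :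
  drawing adj pos arc -> planar R adj'.
Proof.
move=> [pos_inj arcs]; exists pos, arc; split.
  by split=> // e /is_edge_delete_edges[ee _]; exact: arcs.
move=> e f [/is_edge_delete_edges[ee eK] [/is_edge_delete_edges[ff fK] ef]].
by move: (removal.2 e f (conj ee (conj ff ef))); rewrite (negbTE eK) (negbTE fK).
Qed.

End Crossings.

Theorem lemma8 (R : realType) (T : finType) (adj : rel T)
    (pos : T -> R * R) (arc : {set T} -> R -> R * R) (Rm : {set {set T}}) :
  symmetric adj -> irreflexive adj ->
  good_drawing adj pos arc -> one_planar adj arc ->
  type2A adj arc -> nice adj arc ->
  removal_set adj arc Rm ->
  connected_graph adj ->
  connected_graph (delete_edges adj Rm) /\
  subrel (delete_edges adj Rm) adj /\
  planar R (delete_edges adj Rm).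
Proof.
move=> adjS adjI [D _] _ adj2A adj_nice removal conn; split; last split.
- exact: (delete_edges_connected adjS adjI adj2A adj_nice removal conn).
- by move=> u v /andP[].
- exact: (delete_edges_planar removal D).
Qed.
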